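(* Let $V$ be a near vector space over a commutative $F$ with finitely many blocks. Then the complete theory $\mathrm{Th}(V)$ of $V$ in the language $\mathcal L_{Fnvs}=\{+,0,(\lambda)_{\lambda\in F}\}$ admits quantifier elimination (equivalently in $\mathcal L_{\bar Fnvs}$, whose extra symbols are quantifier-free definable).
   Context: A near vector space $(V,F)$: $(V,+)$ a group, $F$ a set of endomorphisms containing $0,1,-1$, with $F\setminus\{0\}$ a subgroup of $\mathrm{Aut}(V,+)$ acting fixed point freely ($\alpha x=\beta x\Rightarrow\alpha=\beta$ or $x=0$), such that the quasi-kernel $Q(V)=\{u:\forall\alpha,\beta\in F\,\exists\gamma\in F\ \alpha u+\beta u=\gamma u\}$ generates $V$. Commutative: $\alpha(\beta v)=\beta(\alpha v)$ for all $\alpha,\beta\in F$, $v\in V$. The blocks of $V$ are the summands in André's decomposition of $V$ into maximal regular near vector subspaces (regular: any two nonzero quasi-kernel elements $u,v$ satisfy $u+\lambda v\in Q(V)$ for some $\lambda\neq0$), each nonzero element of $Q(V)$ lying in exactly one block; for commutative $F$ each block is a vector space over a field $(F,+_i,\circ)$. In $\mathcal L_{Fnvs}$ each $\lambda\in F$ is a unary function symbol interpreted as its action; $\bar F$ is the set of formal finite sums of elements of $F$ acting by pointwise sums, and $\mathcal L_{\bar Fnvs}=\{+,0,(\lambda)_{\lambda\in\bar F}\}$. *)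

From Stdlib Require Import List Arith.
Import ListNotations.
Set Implicit Arguments.

(* V is the carrier, K indexes the set F of endomorphisms (F = image of act). *)

Definition is_group {V : Type} (add : V -> V -> V) (zero : V) (opp : V -> V) : Prop :=
  (forall x y z, add x (add y z) = add (add x y) z) /\
  (forall x, add zero x = x /\ add x zero = x) /\
  (forall x, add (opp x) x = zero /\ add x (opp x) = zero).

Definition nonzero_map {V K : Type} (zero : V) (act : K -> V -> V) (a : K) : Prop :=
  act a <> (fun _ => zero).

Definition bijective_map {V : Type} (f : V -> V) : Prop :=
  (forall x y, f x = f y -> x = y) /\ (forall y, exists x, f x = y).

Definition quasi_kernel {V K : Type} (add : V -> V -> V) (act : K -> V -> V) (u : V) : Prop :=
  forall a b : K, exists c : K, add (act a u) (act b u) = act c u.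

Inductive generated {V : Type} (add : V -> V -> V) (zero : V) (opp : V -> V)
    (P : V -> Prop) : V -> Prop :=
  | gen_base : forall v, P v -> generated add zero opp P v
  | gen_zero : generated add zero opp P zero
  | gen_add : forall u v, generated add zero opp P u -> generated add zero opp P v ->
              generated add zero opp P (add u v)
  | gen_opp : forall u, generated add zero opp P u -> generated add zero opp P (opp u).

Definition is_near_vector_space {V K : Type} (add : V -> V -> V) (zero : V)
    (opp : V -> V) (act : K -> V -> V) : Prop :=
  is_group add zero opp /\
  (forall a x y, act a (add x y) = add (act a x) (act a y)) /\
  (exists a, forall x, act a x = zero) /\
  (exists a, forall x, act a x = x) /\
  (exists a, forall x, act a x = opp x) /\
  (* F \ {0} is a subgroup of Aut(V,+) *)
  (forall a, nonzero_map zero act a -> bijective_map (act a)) /\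
  (forall a b, nonzero_map zero act a -> nonzero_map zero act b ->
     exists c, forall x, act c x = act a (act b x)) /\
  (forall a, nonzero_map zero act a -> exists b, forall x, act b (act a x) = x) /\
  (forall a b x, act a x = act b x -> act a = act b \/ x = zero) /\
  (forall v, generated add zero opp (quasi_kernel add act) v).

Definition commutative_F {V K : Type} (act : K -> V -> V) : Prop :=
  forall a b v, act a (act b v) = act b (act a v).

Definition same_block {V K : Type} (add : V -> V -> V) (zero : V)
    (act : K -> V -> V) (u v : V) : Prop :=
  exists l, nonzero_map zero act l /\ quasi_kernel add act (add u (act l v)).

Definition finitely_many_blocks {V K : Type} (add : V -> V -> V) (zero : V)
    (act : K -> V -> V) : Prop :=
  exists us : list V,
    (forall u, In u us -> quasi_kernel add act u /\ u <> zero) /\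
    (forall q, quasi_kernel add act q -> q <> zero ->
       exists u, In u us /\ same_block add zero act q u).

Inductive term (K : Type) : Type :=
  | tvar : nat -> term K
  | tzero : term K
  | tadd : term K -> term K -> term K
  | tact : K -> term K -> term K.

Inductive formula (K : Type) : Type :=
  | fEq : term K -> term K -> formula K
  | fTrue : formula K
  | fFalse : formula K
  | fNot : formula K -> formula K
  | fAnd : formula K -> formula K -> formula K
  | fOr : formula K -> formula K -> formula K
  | fImp : formula K -> formula K -> formula K
  | fEx : nat -> formula K -> formula K
  | fAll : nat -> formula K -> formula K.

Arguments tzero {K}.
Arguments fTrue {K}.
Arguments fFalse {K}.

Fixpoint eval_term {V K : Type} (add : V -> V -> V) (zero : V) (act : K -> V -> V)
    (e : nat -> V) (t : term K) : V :=
  match t with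
  | tvar _ i => e i
  | tzero => zero
  | tadd t1 t2 => add (eval_term add zero act e t1) (eval_term add zero act e t2)
  | tact a t1 => act a (eval_term add zero act e t1)
  end.

Definition upd {V : Type} (e : nat -> V) (i : nat) (x : V) : nat -> V :=
  fun j => if Nat.eqb j i then x else e j.

Fixpoint holds {V K : Type} (add : V -> V -> V) (zero : V) (act : K -> V -> V)
    (e : nat -> V) (f : formula K) : Prop :=
  match f with
  | fEq t1 t2 => eval_term add zero act e t1 = eval_term add zero act e t2
  | fTrue => True
  | fFalse => False
  | fNot g => ~ holds add zero act e g
  | fAnd g h => holds add zero act e g /\ holds add zero act e h
  | fOr g h => holds add zero act e g \/ holds add zero act e h
  | fImp g h => holds add zero act e g -> holds add zero act e h
  | fEx i g => exists x, holds add zero act (upd e i x) g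
  | fAll i g => forall x, holds add zero act (upd e i x) g
  end.

Fixpoint quantifier_free {K : Type} (f : formula K) : Prop :=
  match f with
  | fEq _ _ | fTrue | fFalse => True
  | fNot g => quantifier_free g
  | fAnd g h | fOr g h | fImp g h => quantifier_free g /\ quantifier_free h
  | fEx _ _ | fAll _ _ => False
  end.

Fixpoint occurs_term {K : Type} (i : nat) (t : term K) : Prop :=
  match t with
  | tvar _ j => i = j
  | tzero => False
  | tadd t1 t2 => occurs_term i t1 \/ occurs_term i t2
  | tact _ t1 => occurs_term i t1
  end.

Fixpoint free_in {K : Type} (i : nat) (f : formula K) : Prop :=
  match f with
  | fEq t1 t2 => occurs_term i t1 \/ occurs_term i t2
  | fTrue | fFalse => False
  | fNot g => free_in i g
  | fAnd g h | fOr g h | fImp g h => free_in i g \/ free_in i h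
  | fEx j g | fAll j g => i <> j /\ free_in i g
  end.

(* Th(V) admits quantifier elimination: every formula is equivalent modulo Th(V)
   (i.e., since Th(V) is the complete theory of V, in V) to a quantifier-free
   formula with no new free variables. *)
Definition theory_has_QE {V K : Type} (add : V -> V -> V) (zero : V)
    (act : K -> V -> V) : Prop :=
  forall phi : formula K, exists psi : formula K,
    quantifier_free psi /\
    (forall i, free_in i psi -> free_in i phi) /\
    (forall e : nat -> V, holds add zero act e phi <-> holds add zero act e psi).

(* Terms read as unary operators [v |-> t(v,...,v)] form a commutative ring of additive maps,
   and on a quasi-kernel element [u] every such operator acts as some scalar of [F], so [u]
   determines an annihilator.  Elements of one block share their annihilator; as there are
   finitely many blocks, separating annihilators by terms and multiplying yields terms
   [p_1, ..., p_n]: orthogonal idempotents with no common kernel, on the image of each of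
   which every term acts as a scalar.  An equation in [x] thus becomes a boolean combination
   of [x]-free formulas and conditions [p_i x = s] with [s] an [x]-free term of the [i]-th
   block.  As the components [p_i x] can be chosen independently, [exists x] is eliminated
   one block at a time: the component either equals one of the finitely many [s] occurring,
   or avoids them all, and the latter is quantifier-free by counting (a block is either
   infinite or of some fixed finite size). *)

From Stdlib Require Import List Arith Lia Classical ClassicalEpsilon RelationClasses.
Import ListNotations.
Set Implicit Arguments.

Lemma list_transversal {A : Type} (R : A -> A -> Prop) (HR : Equivalence R) (L : list A) :
  exists D, incl D L /\ (forall x, In x L -> exists d, In d D /\ R x d) /\
    (forall d d', In d D -> In d' D -> R d d' -> d = d').
Proof.
  induction L as [|x L [D [HDL [Hcov Htr]]]].
  - exists []; repeat split; try easy; intros a [].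
  - destruct (classic (exists d, In d D /\ R x d)) as [Hx|Hx].
    + exists D; split; [|split; [|exact Htr]].
      * intros d Hd; right; auto.
      * intros y [<-|Hy]; auto.
    + exists (x :: D); split; [|split].
      * intros d [<-|Hd]; [left|right]; auto.
      * intros y [<-|Hy]; [exists x; split; [left|]; reflexivity|].
        destruct (Hcov y Hy) as [d [Hd Hyd]]; exists d; split; [right|]; auto.
      * intros d d' [<-|Hd] [<-|Hd'] Hdd'; auto.
        -- contradiction Hx; eauto.
        -- contradiction Hx; exists d; split; [|symmetry]; auto.
Qed.

Lemma finite_listing {A : Type} (B : A -> Prop) (Ls : list A) :
  (forall w, B w -> In w Ls) -> exists Bs, NoDup Bs /\ forall w, In w Bs <-> B w.
Proof.
  intros HLs.
  pose (dec := fun x y : A => excluded_middle_informative (x = y)).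
  exists (nodup dec (filter (fun w => if excluded_middle_informative (B w) then true else false) Ls)).
  split; [apply NoDup_nodup|]; intros w.
  rewrite nodup_In, filter_In.
  destruct (excluded_middle_informative (B w)); intuition (auto; discriminate).
Qed.

Fixpoint tsubst {K : Type} (s : nat -> term K) (t : term K) : term K :=
  match t with
  | tvar _ i => s i
  | tzero => tzero
  | tadd t1 t2 => tadd (tsubst s t1) (tsubst s t2)
  | tact a t1 => tact a (tsubst s t1)
  end.

(* Substitution inside atoms only: it is meant for quantifier-free formulas. *)
Fixpoint fsubst {K : Type} (s : nat -> term K) (f : formula K) : formula K :=
  match f with
  | fEq t1 t2 => fEq (tsubst s t1) (tsubst s t2)
  | fNot g => fNot (fsubst s g)
  | fAnd g h => fAnd (fsubst s g) (fsubst s h)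
  | fOr g h => fOr (fsubst s g) (fsubst s h)
  | fImp g h => fImp (fsubst s g) (fsubst s h)
  | _ => f
  end.

Definition tcomp {K : Type} (s t : term K) : term K := tsubst (fun _ => t) s.

(* [eval (upd e x v) t] is [eval e (x_free_part x t)] plus [x_part x t] applied to [v]. *)
Definition x_free_part {K : Type} (x : nat) (t : term K) : term K :=
  tsubst (fun j => if Nat.eqb j x then tzero else tvar K j) t.

Definition x_part {K : Type} (x : nat) (t : term K) : term K :=
  tsubst (fun j => if Nat.eqb j x then tvar K 0 else tzero) t.

Lemma occurs_tsubst {K : Type} (s : nat -> term K) t i :
  occurs_term i (tsubst s t) -> exists j, occurs_term j t /\ occurs_term i (s j).
Proof.
  induction t as [j| |t1 IH1 t2 IH2|a t IH]; simpl; try tauto.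
  - intros Hi; exists j; auto.
  - intros [Hi|Hi]; [apply IH1 in Hi|apply IH2 in Hi]; destruct Hi as [j [Hj Hij]];
      exists j; auto.
Qed.

Lemma fsubst_qf {K : Type} (s : nat -> term K) f :
  quantifier_free f -> quantifier_free (fsubst s f).
Proof. induction f; simpl; tauto. Qed.

Lemma free_in_fsubst {K : Type} (s : nat -> term K) f i : quantifier_free f ->
  free_in i (fsubst s f) -> exists j, free_in j f /\ occurs_term i (s j).
Proof.
  induction f as [t1 t2| | |g IH|g IHg h IHh|g IHg h IHh|g IHg h IHh| |]; simpl; try tauto.
  - intros _ [Hi|Hi]; apply occurs_tsubst in Hi as [j [Hj Hij]]; exists j; auto.
  - intros [Hg Hh] [Hi|Hi]; [apply IHg in Hi|apply IHh in Hi];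
      try destruct Hi as [j [Hj Hij]]; eauto.
  - intros [Hg Hh] [Hi|Hi]; [apply IHg in Hi|apply IHh in Hi];
      try destruct Hi as [j [Hj Hij]]; eauto.
  - intros [Hg Hh] [Hi|Hi]; [apply IHg in Hi|apply IHh in Hi];
      try destruct Hi as [j [Hj Hij]]; eauto.
Qed.

Section Syntax.
Variables (V K : Type) (add : V -> V -> V) (zero : V) (act : K -> V -> V).
Notation eval := (eval_term add zero act).
Notation sat := (holds add zero act).
Notation eval1 t v := (eval (fun _ => v) t).

Lemma eval_term_ext t e1 e2 :
  (forall i, occurs_term i t -> e1 i = e2 i) -> eval e1 t = eval e2 t.
Proof.
  induction t; simpl; intros H; auto.
  - f_equal; [apply IHt1|apply IHt2]; auto.
  - f_equal; auto.
Qed.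

Lemma holds_ext f : forall e1 e2,
  (forall i, free_in i f -> e1 i = e2 i) -> (sat e1 f <-> sat e2 f).
Proof.
  assert (Hupd : forall (e1 e2 : nat -> V) n x (P : nat -> Prop),
            (forall i, i <> n /\ P i -> e1 i = e2 i) ->
            forall i, P i -> upd e1 n x i = upd e2 n x i).
  { intros e1 e2 n x P H i Hi; unfold upd; destruct (Nat.eqb_spec i n); auto. }
  induction f as [t1 t2| | |g IH|g IHg h IHh|g IHg h IHh|g IHg h IHh|n g IH|n g IH];
    simpl; intros e1 e2 H.
  - rewrite (eval_term_ext t1 e1 e2), (eval_term_ext t2 e1 e2); auto; tauto.
  - tauto.
  - tauto.
  - rewrite (IH e1 e2); tauto.
  - rewrite (IHg e1 e2), (IHh e1 e2); auto; tauto.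
  - rewrite (IHg e1 e2), (IHh e1 e2); auto; tauto.
  - rewrite (IHg e1 e2), (IHh e1 e2); auto; tauto.
  - setoid_rewrite (fun x => IH (upd e1 n x) (upd e2 n x) (Hupd e1 e2 n x _ H)); tauto.
  - setoid_rewrite (fun x => IH (upd e1 n x) (upd e2 n x) (Hupd e1 e2 n x _ H)); tauto.
Qed.

Lemma eval_tsubst s t e : eval e (tsubst s t) = eval (fun j => eval e (s j)) t.
Proof. induction t; simpl; congruence. Qed.

Lemma holds_fsubst s f e : quantifier_free f ->
  (sat e (fsubst s f) <-> sat (fun j => eval e (s j)) f).
Proof.
  induction f; simpl; intros Hq; rewrite ?eval_tsubst, ?IHf, ?IHf1, ?IHf2; tauto.
Qed.

Lemma eval_tcomp s t e : eval e (tcomp s t) = eval1 s (eval e t).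
Proof. apply eval_tsubst. Qed.

Lemma eval1_tcomp s t v : eval1 (tcomp s t) v = eval1 s (eval1 t v).
Proof. apply eval_tcomp. Qed.

(* Variables that are not free in [f] are replaced by [0] in [g]. *)
Lemma qf_equiv_restrict_free f g : quantifier_free g ->
  (forall e, sat e f <-> sat e g) ->
  exists g', quantifier_free g' /\ (forall i, free_in i g' -> free_in i f) /\
    (forall e, sat e f <-> sat e g').
Proof.
  intros Hg Hfg.
  set (s := fun i => if excluded_middle_informative (free_in i f) then tvar K i else tzero).
  exists (fsubst s g); split; [|split].
  - apply fsubst_qf; auto.
  - intros i Hi; destruct (free_in_fsubst s g i Hg Hi) as [j [_ Hij]]; revert Hij.
    unfold s; destruct (excluded_middle_informative (free_in j f)); simpl; [intros ->|]; tauto.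
  - intros e; rewrite holds_fsubst, <- Hfg by auto; apply holds_ext.
    intros i Hi; unfold s; destruct (excluded_middle_informative (free_in i f)); tauto.
Qed.

Lemma theory_has_QE_of_exists_elim :
  (forall x g, quantifier_free g -> exists g', quantifier_free g' /\
     forall e, (exists v, sat (upd e x v) g) <-> sat e g') ->
  theory_has_QE add zero act.
Proof.
  intros Helim f.
  assert (Hqf : exists g, quantifier_free g /\ forall e, sat e f <-> sat e g).
  { induction f as [t1 t2| | |g [g' [Hq H]]|g [g' [Hqg Hg]] h [h' [Hqh Hh]]
                  |g [g' [Hqg Hg]] h [h' [Hqh Hh]]|g [g' [Hqg Hg]] h [h' [Hqh Hh]]
                  |x g [g' [Hq H]]|x g [g' [Hq H]]].
    - exists (fEq t1 t2); simpl; tauto.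
    - exists fTrue; simpl; tauto.
    - exists fFalse; simpl; tauto.
    - exists (fNot g'); simpl; split; auto; intros e; rewrite H; tauto.
    - exists (fAnd g' h'); simpl; split; auto; intros e; rewrite Hg, Hh; tauto.
    - exists (fOr g' h'); simpl; split; auto; intros e; rewrite Hg, Hh; tauto.
    - exists (fImp g' h'); simpl; split; auto; intros e; rewrite Hg, Hh; tauto.
    - destruct (Helim x g' Hq) as [g'' [Hq' H']]; exists g''; split; auto.
      intros e; simpl; rewrite <- H'; split; intros [v Hv]; exists v; apply H; auto.
    - destruct (Helim x (fNot g') Hq) as [g'' [Hq' H']]; exists (fNot g''); split; auto.
      intros e; simpl; rewrite <- H'; split.
      + intros Hall [v Hv]; apply Hv, H, Hall.
      + intros Hno v; apply H, NNPP; intros Hv; apply Hno; exists v; auto. }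
  destruct Hqf as [g [Hq Hfg]]; apply (qf_equiv_restrict_free f g Hq Hfg).
Qed.

Fixpoint mem_terms (t : term K) (L : list (term K)) : formula K :=
  match L with
  | [] => fFalse
  | t' :: L' => fOr (fEq t t') (mem_terms t L')
  end.

Fixpoint at_least_distinct (L : list (term K)) (k : nat) : formula K :=
  match L, k with
  | _, 0 => fTrue
  | [], S _ => fFalse
  | t :: L', S k' =>
      fOr (at_least_distinct L' k) (fAnd (fNot (mem_terms t L')) (at_least_distinct L' k'))
  end.

Lemma mem_terms_qf t L : quantifier_free (mem_terms t L).
Proof. induction L; simpl; auto. Qed.

Lemma at_least_distinct_qf L k : quantifier_free (at_least_distinct L k).
Proof. revert k; induction L; destruct k; simpl; auto using mem_terms_qf. Qed.

Lemma holds_mem_terms t L e : sat e (mem_terms t L) <-> In (eval e t) (map (eval e) L).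
Proof. induction L; simpl; rewrite ?IHL; intuition. Qed.

Lemma holds_at_least_distinct L : forall k e, sat e (at_least_distinct L k) <->
  exists d, NoDup d /\ incl d (map (eval e) L) /\ length d = k.
Proof.
  induction L as [|t L IH]; intros [|k] e; simpl.
  - split; [exists []; repeat split; auto using NoDup_nil; intros ? []|tauto].
  - split; [tauto|intros [[|x d] [_ [Hd Hl]]]; [discriminate|apply (Hd x); left; auto]].
  - split; [exists []; repeat split; auto using NoDup_nil; intros ? []|tauto].
  - rewrite holds_mem_terms, (IH (S k)), (IH k); split.
    + intros [[d [Hd [Hinc Hl]]]|[Ht [d [Hd [Hinc Hl]]]]].
      * exists d; repeat split; auto; intros y Hy; right; auto.
      * exists (eval e t :: d); repeat split; simpl; auto.
        -- constructor; auto.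
        -- intros y [<-|Hy]; [left|right]; auto.
    + intros [d [Hd [Hinc Hl]]].
      destruct (classic (incl d (map (eval e) L))) as [HdL|HdL]; [left; eauto|right].
      apply not_all_ex_not in HdL as [x HdL]; apply imply_to_and in HdL as [Hx HxL].
      destruct (Hinc x Hx) as [<-|]; [|contradiction].
      split; [auto|].
      destruct (in_split _ _ Hx) as [d1 [d2 ->]].
      exists (d1 ++ d2); split; [|split].
      * eapply NoDup_remove_1; eauto.
      * intros y Hy; destruct (Hinc y) as [<-|]; auto.
        -- apply in_app_or in Hy; apply in_or_app; simpl; tauto.
        -- contradiction (NoDup_remove_2 _ _ _ Hd).
      * rewrite length_app in *; simpl in Hl; lia.
Qed.

(* A finite [B] of size [n] has a point outside the values of [L] iff these are fewer than
   [n]; an infinite [B] always has one. *)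
Lemma avoid_values_qf (B : V -> Prop) (L : list (term K)) :
  (forall t, In t L -> forall e, B (eval e t)) ->
  exists f, quantifier_free f /\
    forall e, sat e f <-> exists w, B w /\ forall t, In t L -> w <> eval e t.
Proof.
  intros HL.
  destruct (classic (exists Ls, forall w, B w -> In w Ls)) as [[Ls HLs]|Hinf].
  - destruct (finite_listing B Ls HLs) as [Bs [HBs HBsB]].
    exists (fNot (at_least_distinct L (length Bs))); split; [apply at_least_distinct_qf|].
    intros e; simpl; rewrite holds_at_least_distinct; split.
    + intros Hno; apply NNPP; intros Hall; apply Hno.
      exists Bs; repeat split; auto.
      intros w Hw; apply HBsB in Hw; apply NNPP; intros Hnot; apply Hall.
      exists w; split; auto; intros t Ht ->; apply Hnot, in_map; auto.
    + intros [w [Hw Hwt]] [d [Hd [Hinc Hl]]].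
      assert (Hwd : NoDup (w :: d)).
      { constructor; auto; intros Hin.
        apply Hinc, in_map_iff in Hin as [t [Ht HtL]]; apply (Hwt t HtL); auto. }
      assert (Hsub : incl (w :: d) Bs).
      { intros y [<-|Hy]; apply HBsB; auto.
        apply Hinc, in_map_iff in Hy as [t [<- Ht]]; apply HL; auto. }
      apply NoDup_incl_length in Hsub; auto; simpl in Hsub; lia.
  - exists fTrue; split; simpl; auto; intros e; split; auto; intros _.
    apply NNPP; intros Hno; apply Hinf; exists (map (eval e) L).
    intros w Hw; apply NNPP; intros HwL; apply Hno.
    exists w; split; auto; intros t Ht ->; apply HwL, in_map; auto.
Qed.

End Syntax.

Inductive bexpr (A : Type) : Type :=
  | BAtom : A -> bexpr A
  | BNot : bexpr A -> bexpr A
  | BAnd : bexpr A -> bexpr A -> bexpr A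
  | BOr : bexpr A -> bexpr A -> bexpr A.

Arguments BAtom {A}.
Arguments BNot {A}.
Arguments BAnd {A}.
Arguments BOr {A}.

Fixpoint bsem {A : Type} (P : A -> Prop) (b : bexpr A) : Prop :=
  match b with
  | BAtom a => P a
  | BNot b1 => ~ bsem P b1
  | BAnd b1 b2 => bsem P b1 /\ bsem P b2
  | BOr b1 b2 => bsem P b1 \/ bsem P b2
  end.

Fixpoint batoms {A : Type} (b : bexpr A) : list A :=
  match b with
  | BAtom a => [a]
  | BNot b1 => batoms b1
  | BAnd b1 b2 | BOr b1 b2 => batoms b1 ++ batoms b2
  end.

Fixpoint bmap {A B : Type} (f : A -> B) (b : bexpr A) : bexpr B :=
  match b with
  | BAtom a => BAtom (f a)
  | BNot b1 => BNot (bmap f b1)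
  | BAnd b1 b2 => BAnd (bmap f b1) (bmap f b2)
  | BOr b1 b2 => BOr (bmap f b1) (bmap f b2)
  end.

Lemma bsem_ext {A : Type} (P1 P2 : A -> Prop) b :
  (forall a, In a (batoms b) -> (P1 a <-> P2 a)) -> (bsem P1 b <-> bsem P2 b).
Proof.
  induction b; simpl; intros H; [apply H; auto|..];
    rewrite ?IHb, ?IHb1, ?IHb2; try tauto; intros a Ha; apply H, in_or_app; auto.
Qed.

Lemma bsem_bmap {A B : Type} (P : B -> Prop) (f : A -> B) b :
  bsem P (bmap f b) <-> bsem (fun a => P (f a)) b.
Proof. induction b; simpl; rewrite ?IHb, ?IHb1, ?IHb2; tauto. Qed.

Lemma batoms_bmap {A B : Type} (f : A -> B) b : batoms (bmap f b) = map f (batoms b).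
Proof. induction b; simpl; rewrite ?map_app; congruence. Qed.

Lemma bsem_fold_or {A : Type} (P : A -> Prop) b0 l :
  bsem P (fold_right BOr b0 l) <-> bsem P b0 \/ exists b, In b l /\ bsem P b.
Proof.
  induction l as [|b l IH]; simpl; [firstorder|rewrite IH].
  split; [intros [H|[H|[c [Hc H]]]]|intros [H|[c [[<-|Hc] H]]]]; eauto.
Qed.

Lemma batoms_fold_or {A : Type} (b0 : bexpr A) l a : In a (batoms (fold_right BOr b0 l)) ->
  In a (batoms b0) \/ exists b, In b l /\ In a (batoms b).
Proof.
  induction l as [|b l IH]; simpl; [auto|].
  rewrite in_app_iff; intros [H|H]; [eauto|destruct (IH H) as [|[c [Hc Hac]]]; eauto].
Qed.

Section NearVectorSpace.
Variables (V K : Type) (add : V -> V -> V) (zero : V) (opp : V -> V) (act : K -> V -> V).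
Hypothesis HV : is_near_vector_space add zero opp act.
Hypothesis Hcomm : commutative_F act.
Notation eval := (eval_term add zero act).
Notation eval1 t v := (eval_term add zero act (fun _ => v) t).
Notation sat := (holds add zero act).
Notation Q := (quasi_kernel add act).

Lemma addA x y z : add x (add y z) = add (add x y) z.
Proof. destruct HV as [[H _] _]; apply H. Qed.

Lemma add0l x : add zero x = x.
Proof. destruct HV as [[_ [H _]] _]; apply H. Qed.

Lemma add0r x : add x zero = x.
Proof. destruct HV as [[_ [H _]] _]; apply H. Qed.

Lemma addNl x : add (opp x) x = zero.
Proof. destruct HV as [[_ [_ H]] _]; apply H. Qed.

Lemma addNr x : add x (opp x) = zero.
Proof. destruct HV as [[_ [_ H]] _]; apply H. Qed.

Lemma act_add a x y : act a (add x y) = add (act a x) (act a y).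
Proof. destruct HV as [_ [H _]]; apply H. Qed.

Lemma exists_act_zero : exists a, forall x, act a x = zero.
Proof. destruct HV as [_ [_ [H _]]]; exact H. Qed.

Lemma exists_act_id : exists a, forall x, act a x = x.
Proof. destruct HV as [_ [_ [_ [H _]]]]; exact H. Qed.

Lemma exists_act_opp : exists a, forall x, act a x = opp x.
Proof. destruct HV as [_ [_ [_ [_ [H _]]]]]; exact H. Qed.

Lemma act_comp_nonzero a b : nonzero_map zero act a -> nonzero_map zero act b ->
  exists c, forall x, act c x = act a (act b x).
Proof. destruct HV as [_ [_ [_ [_ [_ [_ [H _]]]]]]]; apply H. Qed.

Lemma act_inv_nonzero a : nonzero_map zero act a -> exists a', forall x, act a' (act a x) = x.
Proof. destruct HV as [_ [_ [_ [_ [_ [_ [_ [H _]]]]]]]]; apply H. Qed.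

Lemma generated_quasi_kernel v : generated add zero opp Q v.
Proof. destruct HV as [_ [_ [_ [_ [_ [_ [_ [_ [_ H]]]]]]]]]; apply H. Qed.

Lemma opp_unique x y : add x y = zero -> y = opp x.
Proof. intros H; rewrite <- (add0l y), <- (addNl x), <- addA, H, add0r; reflexivity. Qed.

Lemma oppK x : opp (opp x) = x.
Proof. symmetry; apply opp_unique, addNl. Qed.

Lemma opp_zero : opp zero = zero.
Proof. symmetry; apply opp_unique, add0l. Qed.

(* [-1] is an endomorphism, so [opp] is additive as well as antiadditive. *)
Lemma addC x y : add x y = add y x.
Proof.
  destruct exists_act_opp as [m Hm].
  assert (Hopp : forall a b, add (opp a) (opp b) = add (opp b) (opp a)).
  { intros a b; rewrite <- !Hm, <- act_add, Hm; symmetry; apply opp_unique.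
    rewrite <- addA, (addA b), !Hm, addNr, add0l, addNr; reflexivity. }
  rewrite <- (oppK x), <- (oppK y); apply Hopp.
Qed.

Lemma addACA a b c d : add (add a b) (add c d) = add (add a c) (add b d).
Proof. rewrite <- !addA, (addA b c d), (addC b c), <- addA; reflexivity. Qed.

Lemma sub_eq0 x y : add x (opp y) = zero <-> x = y.
Proof.
  split; [|intros ->; apply addNr].
  intros H; apply opp_unique in H; rewrite <- (oppK x), <- H; apply oppK.
Qed.

Lemma additive_zero (f : V -> V) : (forall x y, f (add x y) = add (f x) (f y)) -> f zero = zero.
Proof.
  intros Hf; pose proof (Hf zero zero) as H; rewrite add0l in H.
  transitivity (add (add (opp (f zero)) (f zero)) (f zero)).
  - rewrite addNl, add0l; reflexivity.
  - rewrite <- addA, <- H; apply addNl.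
Qed.

Lemma additive_opp (f : V -> V) : (forall x y, f (add x y) = add (f x) (f y)) ->
  forall x, f (opp x) = opp (f x).
Proof. intros Hf x; apply opp_unique; rewrite <- Hf, addNr; apply additive_zero, Hf. Qed.

Lemma act_zero a : act a zero = zero.
Proof. apply additive_zero, act_add. Qed.

Lemma eval1_add t x y : eval1 t (add x y) = add (eval1 t x) (eval1 t y).
Proof.
  induction t; simpl.
  - reflexivity.
  - rewrite add0l; reflexivity.
  - rewrite IHt1, IHt2, addACA; reflexivity.
  - rewrite IHt, act_add; reflexivity.
Qed.

Lemma eval1_zero t : eval1 t zero = zero.
Proof. apply (additive_zero (fun v => eval1 t v)), eval1_add. Qed.

Lemma eval1_opp t x : eval1 t (opp x) = opp (eval1 t x).
Proof. apply (additive_opp (fun v => eval1 t v)), eval1_add. Qed.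

Lemma eval1_act t a v : eval1 t (act a v) = act a (eval1 t v).
Proof.
  induction t; simpl; [reflexivity|rewrite act_zero|rewrite IHt1, IHt2, act_add|rewrite IHt];
    auto.
Qed.

Lemma eval1_comm s t v : eval1 s (eval1 t v) = eval1 t (eval1 s v).
Proof.
  induction s; simpl;
    [reflexivity|rewrite eval1_zero|rewrite IHs1, IHs2, eval1_add|rewrite IHs, eval1_act]; auto.
Qed.

Lemma eval_upd_split x t e v :
  eval (upd e x v) t = add (eval e (x_free_part x t)) (eval1 (x_part x t) v).
Proof.
  unfold x_free_part, x_part; induction t; simpl.
  - unfold upd; destruct (Nat.eqb n x); simpl; rewrite ?add0l, ?add0r; reflexivity.
  - rewrite add0l; reflexivity.
  - rewrite IHt1, IHt2, addACA; reflexivity.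
  - rewrite IHt, act_add; reflexivity.
Qed.

Lemma zero_map a : ~ nonzero_map zero act a -> forall x, act a x = zero.
Proof. intros H x; apply NNPP in H; rewrite H; reflexivity. Qed.

Lemma act_zero_or_inv a : (forall x, act a x = zero) \/ exists a', forall x, act a' (act a x) = x.
Proof.
  destruct (classic (nonzero_map zero act a)) as [H|H];
    [right; apply act_inv_nonzero|left; apply zero_map]; auto.
Qed.

Lemma act_inv_r a a' : (forall x, act a' (act a x) = x) -> forall x, act a (act a' x) = x.
Proof. intros H x; rewrite Hcomm; apply H. Qed.

Lemma act_comp a b : exists c, forall x, act c x = act a (act b x).
Proof.
  destruct exists_act_zero as [z Hz].
  destruct (classic (nonzero_map zero act a)) as [Ha|Ha];
    [destruct (classic (nonzero_map zero act b)) as [Hb|Hb]|].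
  - apply act_comp_nonzero; auto.
  - exists z; intros x; rewrite Hz, (zero_map Hb), act_zero; reflexivity.
  - exists z; intros x; rewrite Hz, (zero_map Ha); reflexivity.
Qed.

Lemma act_eq_zero a x : act a x = zero -> x = zero \/ forall y, act a y = zero.
Proof.
  intros H; destruct (act_zero_or_inv a) as [Ha|[a' Ha']]; [right; auto|left].
  rewrite <- (Ha' x), H; apply act_zero.
Qed.

Lemma nonzero_act_inj a x : nonzero_map zero act a -> act a x = zero -> x = zero.
Proof.
  intros Ha Hx; destruct (act_inv_nonzero Ha) as [a' Ha'].
  rewrite <- (Ha' x), Hx; apply act_zero.
Qed.

Lemma quasi_kernel_act l u : Q u -> Q (act l u).
Proof.
  intros Hu a b; destruct (Hu a b) as [c Hc]; exists c.
  rewrite (Hcomm a l), (Hcomm b l), (Hcomm c l), <- act_add, Hc; reflexivity.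
Qed.

Lemma eval1_quasi_kernel u t : Q u -> exists a, eval1 t u = act a u.
Proof.
  intros Hu; induction t as [i| |t1 [a1 H1] t2 [a2 H2]|k t [a Ha]]; simpl.
  - destruct exists_act_id as [o Ho]; exists o; auto.
  - destruct exists_act_zero as [z Hz]; exists z; auto.
  - rewrite H1, H2; apply Hu.
  - destruct (act_comp k a) as [c Hc]; exists c; rewrite Ha; auto.
Qed.

Lemma eval1_ext_quasi_kernel s t :
  (forall q, Q q -> q <> zero -> eval1 s q = eval1 t q) -> forall v, eval1 s v = eval1 t v.
Proof.
  intros H v; induction (generated_quasi_kernel v) as [q Hq| |x y _ IHx _ IHy|x _ IHx].
  - destruct (classic (q = zero)) as [->|Hq0]; auto; rewrite !eval1_zero; reflexivity.
  - rewrite !eval1_zero; reflexivity.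
  - rewrite !eval1_add, IHx, IHy; reflexivity.
  - rewrite !eval1_opp, IHx; reflexivity.
Qed.

Lemma eval1_ext_quasi_kernel_zero t :
  (forall q, Q q -> q <> zero -> eval1 t q = zero) -> forall v, eval1 t v = zero.
Proof. intros H v; apply (eval1_ext_quasi_kernel t tzero); auto. Qed.

(* Blocks are recognised by annihilators in the ring of term operators. *)
Definition same_annihilator (u v : V) : Prop :=
  forall t : term K, eval1 t u = zero <-> eval1 t v = zero.

Instance same_annihilator_equiv : Equivalence same_annihilator.
Proof.
  split; [intros u t|intros u v H t|intros u v w H1 H2 t];
    [reflexivity|symmetry; apply H|rewrite (H1 t); apply H2].
Qed.

Lemma same_annihilator_eq u v s t :
  same_annihilator u v -> eval1 s u = eval1 t u -> eval1 s v = eval1 t v.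
Proof.
  destruct exists_act_opp as [m Hm]; intros H Hu.
  specialize (H (tadd s (tact m t))); simpl in H; rewrite !Hm, !sub_eq0 in H; tauto.
Qed.

Lemma quasi_kernel_sum_annihilated q u t : Q q -> q <> zero -> Q u -> Q (add q u) ->
  eval1 t q = zero -> eval1 t u = zero.
Proof.
  intros Hq Hq0 Hu Hqu Htq.
  destruct exists_act_opp as [m Hm].
  destruct (eval1_quasi_kernel t Hu) as [b Hb].
  destruct (eval1_quasi_kernel t Hqu) as [c Hc].
  destruct (eval1_quasi_kernel (tadd (tact b (tvar K 0)) (tact m (tact c (tvar K 0)))) Hu)
    as [d Hd]; simpl in Hd; rewrite Hm in Hd.
  rewrite eval1_add, Htq, add0l, Hb, act_add in Hc.
  assert (Hcq : act c q = act d u).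
  { rewrite <- Hd, Hc, <- addA, addNr, add0r; reflexivity. }
  (* applying [t] to [c q = d u] gives [b (c q) = 0] *)
  assert (Hbcq : act b (act c q) = zero).
  { rewrite Hcq, Hcomm, <- Hb, <- eval1_act, <- Hcq, eval1_act, Htq; apply act_zero. }
  rewrite Hb; destruct (act_eq_zero Hbcq) as [Hcq0|Hb0]; auto.
  destruct (act_eq_zero Hcq0) as [|Hc0]; [contradiction|].
  rewrite Hc, !Hc0, add0l; reflexivity.
Qed.

Lemma same_block_same_annihilator q u : Q q -> q <> zero -> Q u -> u <> zero ->
  same_block add zero act q u -> same_annihilator q u.
Proof.
  intros Hq Hq0 Hu Hu0 [l [Hl Hw]] t; split; intros Ht.
  - assert (Hlu : eval1 t (act l u) = zero)
      by (apply (quasi_kernel_sum_annihilated t Hq Hq0); auto using quasi_kernel_act).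
    rewrite eval1_act in Hlu; apply (nonzero_act_inj Hl Hlu).
  - destruct (act_inv_nonzero Hl) as [l' Hl'].
    assert (Hsum : add u (act l' q) = act l' (add q (act l u)))
      by (rewrite act_add, Hl', addC; reflexivity).
    assert (Hlq : eval1 t (act l' q) = zero).
    { apply (quasi_kernel_sum_annihilated t Hu Hu0); auto using quasi_kernel_act.
      rewrite Hsum; auto using quasi_kernel_act. }
    rewrite eval1_act in Hlq; destruct (act_eq_zero Hlq) as [|Hl'0]; auto.
    contradiction Hu0; rewrite <- (Hl' u); apply Hl'0.
Qed.

Lemma separating_term u w : Q u -> Q w -> ~ same_annihilator w u ->
  exists t, eval1 t u = u /\ eval1 t w = zero.
Proof.
  intros Hu Hw Hwu; destruct exists_act_opp as [m Hm].
  apply not_all_ex_not in Hwu as [t Ht].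
  destruct (classic (eval1 t w = zero)) as [Htw|Htw].
  - assert (Htu : eval1 t u <> zero) by tauto.
    destruct (eval1_quasi_kernel t Hu) as [a Ha].
    destruct (act_zero_or_inv a) as [Ha0|[a' Ha']]; [rewrite Ha, Ha0 in Htu; contradiction|].
    exists (tact a' t); simpl; rewrite Ha, Ha', Htw, act_zero; auto.
  - assert (Htu : eval1 t u = zero) by tauto.
    destruct (eval1_quasi_kernel t Hw) as [a Ha].
    destruct (act_zero_or_inv a) as [Ha0|[a' Ha']]; [rewrite Ha, Ha0 in Htw; contradiction|].
    exists (tadd (tvar K 0) (tact m (tact a' t))); simpl.
    rewrite !Hm, Htu, Ha, Ha', act_zero, opp_zero, add0r, addNr; auto.
Qed.

Lemma isolating_term u L : Q u -> (forall w, In w L -> Q w) ->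
  exists t, eval1 t u = u /\
    forall w, In w L -> ~ same_annihilator w u -> eval1 t w = zero.
Proof.
  intros Hu; induction L as [|w L IH]; intros HL.
  - exists (tvar K 0); split; [reflexivity|intros w []].
  - destruct IH as [t [Htu Ht]]; [intros w' Hw'; apply HL; right; auto|].
    destruct (classic (same_annihilator w u)) as [Hwu|Hwu].
    + exists t; split; auto; intros w' [<-|Hw'] Hn; [contradiction|auto].
    + destruct (separating_term Hu (HL w (or_introl eq_refl)) Hwu) as [s [Hsu Hsw]].
      exists (tcomp s t); rewrite eval1_tcomp, Htu, Hsu; split; auto.
      intros w' [<-|Hw'] Hn; rewrite eval1_tcomp.
      * rewrite eval1_comm, Hsw; apply eval1_zero.
      * rewrite Ht, eval1_zero; auto.
Qed.

Definition block_projection (d : V) (p : term K) : Prop :=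
  forall q, Q q -> (same_annihilator q d -> eval1 p q = q) /\
                   (~ same_annihilator q d -> eval1 p q = zero).

(* A projection of [V] onto each of its blocks, given by a term. *)
Record projection_system (P : list (term K)) : Prop := {
  proj_idempotent : forall p v, In p P -> eval1 p (eval1 p v) = eval1 p v;
  proj_orthogonal : forall p p' v, In p P -> In p' P -> p <> p' -> eval1 p (eval1 p' v) = zero;
  proj_faithful : forall w, (forall p, In p P -> eval1 p w = zero) -> w = zero;
  proj_scalar : forall p t, In p P -> exists a, forall v, eval1 t (eval1 p v) = act a (eval1 p v)
}.

Section BlockProjections.
Variable D : list V.
Hypothesis HDQ : forall d, In d D -> Q d.
Hypothesis HDcover : forall q, Q q -> q <> zero -> exists d, In d D /\ same_annihilator q d.

Lemma block_projection_exists d : In d D -> exists p, block_projection d p.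
Proof.
  intros Hd; destruct (isolating_term D (HDQ d Hd) HDQ) as [t [Htd Ht]]; exists t.
  intros q Hq; destruct (classic (q = zero)) as [->|Hq0]; [rewrite eval1_zero; auto|split].
  - intros Hqd; apply (@same_annihilator_eq d q t (tvar K 0)); [symmetry|]; auto.
  - intros Hqd; destruct (HDcover Hq Hq0) as [w [Hw Hqw]]; apply (Hqw t), Ht; auto.
    intros Hwd; apply Hqd; transitivity w; auto.
Qed.

Variable proj : V -> term K.
Hypothesis HDtransversal : forall d d', In d D -> In d' D -> same_annihilator d d' -> d = d'.
Hypothesis Hproj : forall d, In d D -> block_projection d (proj d).

Lemma block_projections_idempotent d v : In d D ->
  eval1 (proj d) (eval1 (proj d) v) = eval1 (proj d) v.
Proof.
  intros Hd; rewrite <- eval1_tcomp; revert v; apply eval1_ext_quasi_kernel.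
  intros q Hq _; rewrite eval1_tcomp; destruct (Hproj d Hd Hq) as [H1 H2].
  destruct (classic (same_annihilator q d)); [rewrite !H1|rewrite H2, eval1_zero]; auto.
Qed.

Lemma block_projections_orthogonal d d' v : In d D -> In d' D -> d <> d' ->
  eval1 (proj d) (eval1 (proj d') v) = zero.
Proof.
  intros Hd Hd' Hne; rewrite <- eval1_tcomp; revert v; apply eval1_ext_quasi_kernel_zero.
  intros q Hq _; rewrite eval1_tcomp; destruct (Hproj d' Hd' Hq) as [H1 H2].
  destruct (classic (same_annihilator q d')) as [Hqd'|Hqd']; [rewrite H1 by auto|].
  - apply (Hproj d Hd Hq); intros Hqd; apply Hne, HDtransversal; auto.
    transitivity q; [symmetry|]; auto.
  - rewrite H2 by auto; apply eval1_zero.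
Qed.

Lemma block_projections_scalar d t : In d D ->
  exists a, forall v, eval1 t (eval1 (proj d) v) = act a (eval1 (proj d) v).
Proof.
  intros Hd; destruct (eval1_quasi_kernel t (HDQ d Hd)) as [a Ha]; exists a.
  intros v; rewrite <- eval1_tcomp; revert v.
  apply (eval1_ext_quasi_kernel (tcomp t (proj d)) (tact a (proj d))).
  intros q Hq _; rewrite eval1_tcomp; simpl; destruct (Hproj d Hd Hq) as [H1 H2].
  destruct (classic (same_annihilator q d)) as [Hqd|Hqd].
  - rewrite H1 by auto; apply (@same_annihilator_eq d q t (tact a (tvar K 0))); auto.
    symmetry; auto.
  - rewrite H2, eval1_zero, act_zero; auto.
Qed.

Lemma product_of_complements D' : incl D' D -> exists t,
  (forall v, (forall d, In d D' -> eval1 (proj d) v = zero) -> eval1 t v = v) /\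
  (forall q, Q q -> (exists d, In d D' /\ same_annihilator q d) -> eval1 t q = zero).
Proof.
  destruct exists_act_opp as [m Hm].
  induction D' as [|d D' IH]; intros HD'.
  - exists (tvar K 0); split; [reflexivity|intros q _ [d [[] _]]].
  - destruct IH as [t [Ht1 Ht2]]; [intros d' Hd'; apply HD'; right; auto|].
    set (c := tadd (tvar K 0) (tact m (proj d))).
    assert (Hc : forall v, eval1 c v = add v (opp (eval1 (proj d) v)))
      by (intros v; simpl; rewrite Hm; reflexivity).
    assert (Hd : In d D) by (apply HD'; left; auto).
    exists (tcomp c t); split.
    + intros v Hv; rewrite eval1_tcomp, Ht1 by (intros d' Hd'; apply Hv; right; auto).
      rewrite Hc, (Hv d (or_introl eq_refl)), opp_zero, add0r; reflexivity.
    + intros q Hq [d' [[<-|Hd'] Hqd']]; rewrite eval1_tcomp.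
      * rewrite eval1_comm, Hc, (proj1 (Hproj d Hd Hq) Hqd'), addNr; apply eval1_zero.
      * rewrite Ht2, eval1_zero; eauto.
Qed.

Lemma block_projections_faithful w : (forall d, In d D -> eval1 (proj d) w = zero) -> w = zero.
Proof.
  intros Hw; destruct (product_of_complements (incl_refl D)) as [t [Ht1 Ht2]].
  rewrite <- (Ht1 w Hw); apply eval1_ext_quasi_kernel_zero; auto.
Qed.

Lemma block_projections_system : projection_system (map proj D).
Proof.
  split.
  - intros p v Hp; apply in_map_iff in Hp as [d [<- Hd]].
    apply block_projections_idempotent; auto.
  - intros p p' v Hp Hp' Hne; apply in_map_iff in Hp as [d [<- Hd]];
      apply in_map_iff in Hp' as [d' [<- Hd']].
    apply block_projections_orthogonal; auto; intros ->; auto.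
  - intros w Hw; apply block_projections_faithful; intros d Hd; apply Hw, in_map; auto.
  - intros p t Hp; apply in_map_iff in Hp as [d [<- Hd]]; apply block_projections_scalar; auto.
Qed.

End BlockProjections.

Lemma projection_system_exists :
  finitely_many_blocks add zero act -> exists P, projection_system P.
Proof.
  intros [us [Hus Hcov]].
  destruct (list_transversal same_annihilator_equiv us) as [D [HDus [HDcov HDtr]]].
  assert (HDQ : forall d, In d D -> Q d) by (intros d Hd; apply (Hus d), HDus, Hd).
  assert (HDcover : forall q, Q q -> q <> zero -> exists d, In d D /\ same_annihilator q d).
  { intros q Hq Hq0; destruct (Hcov q Hq Hq0) as [u [Hu Hqu]].
    destruct (HDcov u Hu) as [d [Hd Hud]]; exists d; split; auto.
    destruct (Hus u Hu) as [HuQ Hu0].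
    transitivity u; [apply same_block_same_annihilator|]; auto. }
  destruct (choice (fun d p => In d D -> block_projection d p)) as [proj Hproj].
  { intros d; destruct (classic (In d D)) as [Hd|Hd].
    - destruct (block_projection_exists D HDQ HDcover d Hd) as [p Hp]; eauto.
    - exists tzero; contradiction. }
  exists (map proj D); apply block_projections_system; auto.
Qed.

(* [AComp p t]: the [p]-component of the eliminated variable equals [t]. *)
Inductive block_atom : Type :=
  | AFree : formula K -> block_atom
  | AComp : term K -> term K -> block_atom.

Definition atom_sem (e : nat -> V) (v : V) (a : block_atom) : Prop :=
  match a with
  | AFree f => sat e f
  | AComp p t => eval1 p v = eval e t
  end.

(* [R] lists the projections whose components may still occur. *)
Definition atom_ok (R : list (term K)) (a : block_atom) : Prop :=
  match a with
  | AFree f => quantifier_free f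
  | AComp p t => In p R /\ forall e, eval1 p (eval e t) = eval e t
  end.

Definition bexpr_ok (R : list (term K)) (b : bexpr block_atom) : Prop :=
  forall a, In a (batoms b) -> atom_ok R a.

(* The atoms of [BAnd b c] as well as of [BOr b c]. *)
Lemma bexpr_ok_app R b c : bexpr_ok R b -> bexpr_ok R c ->
  forall a, In a (batoms b ++ batoms c) -> atom_ok R a.
Proof. intros Hb Hc a Ha; apply in_app_or in Ha as [Ha|Ha]; auto. Qed.

(* [Some t']: the [p]-component is [t']; [None]: it differs from every [t] in the atoms. *)
Definition fix_component (p : term K) (c : option (term K)) (a : block_atom) : block_atom :=
  match a with
  | AComp p' t =>
      if excluded_middle_informative (p' = p) then
        match c with Some t' => AFree (fEq t' t) | None => AFree fFalse end
      else a
  | AFree _ => a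
  end.

Definition component_terms (p : term K) (b : bexpr block_atom) : list (term K) :=
  flat_map (fun a => match a with
                     | AComp p' t => if excluded_middle_informative (p' = p) then [t] else []
                     | AFree _ => []
                     end) (batoms b).

Lemma in_component_terms p b t : In t (component_terms p b) <-> In (AComp p t) (batoms b).
Proof.
  unfold component_terms; rewrite in_flat_map; split.
  - intros [[f|p' t'] [Ha Ht]]; [destruct Ht|].
    destruct (excluded_middle_informative (p' = p)) as [->|]; [|destruct Ht].
    destruct Ht as [<-|[]]; auto.
  - intros H; exists (AComp p t); split; auto.
    destruct (excluded_middle_informative (p = p)); [left|contradiction]; auto.
Qed.

Lemma bexpr_ok_fix p c R b : bexpr_ok (p :: R) b -> bexpr_ok R (bmap (fix_component p c) b).
Proof.
  intros Hb a; rewrite batoms_bmap, in_map_iff; intros [[f|p' t] [<- Ha]]; simpl.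
  - apply (Hb _ Ha).
  - destruct (excluded_middle_informative (p' = p)) as [->|Hne]; [destruct c; simpl; auto|].
    destruct (Hb _ Ha) as [[->|HR] Ht]; [contradiction|split; auto].
Qed.

Lemma bsem_fix_some p t' b e v : eval1 p v = eval e t' ->
  (bsem (atom_sem e v) (bmap (fix_component p (Some t')) b) <-> bsem (atom_sem e v) b).
Proof.
  intros Hv; rewrite bsem_bmap; apply bsem_ext; intros [f|p' t] _; simpl; [tauto|].
  destruct (excluded_middle_informative (p' = p)) as [->|]; simpl; [rewrite Hv|]; tauto.
Qed.

Lemma bsem_fix_none p b e v : (forall t, In t (component_terms p b) -> eval1 p v <> eval e t) ->
  (bsem (atom_sem e v) (bmap (fix_component p None) b) <-> bsem (atom_sem e v) b).
Proof.
  intros Hv; rewrite bsem_bmap; apply bsem_ext; intros [f|p' t] Ha; simpl; [tauto|].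
  destruct (excluded_middle_informative (p' = p)) as [->|]; simpl; [|tauto].
  specialize (Hv t (proj2 (in_component_terms p b t) Ha)); tauto.
Qed.

Lemma bsem_fix_move p c R b e v v' : bexpr_ok (p :: R) b ->
  (forall p', In p' R -> p' <> p -> eval1 p' v' = eval1 p' v) ->
  bsem (atom_sem e v) (bmap (fix_component p c) b) ->
  bsem (atom_sem e v') (bmap (fix_component p c) b).
Proof.
  intros Hb Hvv'; rewrite !bsem_bmap; apply bsem_ext; intros [f|p' t] Ha; simpl; [tauto|].
  destruct (excluded_middle_informative (p' = p)) as [->|Hne]; [destruct c; simpl; tauto|].
  destruct (Hb _ Ha) as [[->|HR] _]; [contradiction|simpl; rewrite Hvv'; auto; tauto].
Qed.

Section Elimination.
Variable P : list (term K).
Hypothesis HP : projection_system P.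

Lemma eq_iff_components u w : u = w <-> forall p, In p P -> eval1 p u = eval1 p w.
Proof.
  split; [intros ->; auto|intros H].
  apply sub_eq0, (proj_faithful HP); intros p Hp.
  rewrite eval1_add, eval1_opp, H, addNr; auto.
Qed.

Lemma exists_component p v y : In p P -> eval1 p y = y ->
  exists v', eval1 p v' = y /\ forall p', In p' P -> p' <> p -> eval1 p' v' = eval1 p' v.
Proof.
  intros Hp Hy; exists (add (add v (opp (eval1 p v))) y); split.
  - rewrite !eval1_add, eval1_opp, (proj_idempotent HP), addNr, add0l; auto.
  - intros p' Hp' Hne; rewrite !eval1_add, eval1_opp, (proj_orthogonal HP) by auto.
    rewrite <- Hy, (proj_orthogonal HP), opp_zero, !add0r; auto.
Qed.

Lemma component_equation_atom p r s : In p P -> exists a, atom_ok P a /\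
  forall e v, atom_sem e v a <-> eval1 p (eval1 r v) = eval1 p (eval e s).
Proof.
  (* [r] acts on the image of [p] as a scalar [c], which is either [0] or invertible *)
  intros Hp; destruct (proj_scalar HP p r Hp) as [c Hc].
  destruct (act_zero_or_inv c) as [Hc0|[c' Hc']].
  - exists (AFree (fEq (tcomp p s) tzero)); split; [simpl; auto|intros e v; simpl].
    rewrite eval_tcomp, eval1_comm, Hc, Hc0; split; auto.
  - exists (AComp p (tact c' (tcomp p s))); split.
    + split; auto; intros e; simpl; rewrite eval_tcomp, eval1_act, (proj_idempotent HP); auto.
    + intros e v; simpl; rewrite eval_tcomp, eval1_comm, Hc; split; intros H.
      * rewrite H; apply act_inv_r, Hc'.
      * rewrite <- H, Hc'; reflexivity.
Qed.

Lemma components_bexpr r s R : incl R P -> exists b, bexpr_ok P b /\ forall e v,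
  bsem (atom_sem e v) b <-> forall p, In p R -> eval1 p (eval1 r v) = eval1 p (eval e s).
Proof.
  induction R as [|p R IH]; intros HR.
  - exists (BAtom (AFree fTrue)); split; [intros a [<-|[]]; simpl; auto|simpl; tauto].
  - destruct IH as [b [Hb Hbsem]]; [intros p' Hp'; apply HR; right; auto|].
    destruct (component_equation_atom p r s (HR p (or_introl eq_refl))) as [a [Ha Hasem]].
    exists (BAnd (BAtom a) b); split; [intros a' [<-|Ha']; auto|].
    intros e v; simpl; rewrite Hasem, Hbsem; split.
    + intros [H1 H2] p' [<-|Hp']; auto.
    + intros H; split; auto.
Qed.

Lemma equation_bexpr x t1 t2 : exists b, bexpr_ok P b /\
  forall e v, bsem (atom_sem e v) b <-> eval (upd e x v) t1 = eval (upd e x v) t2.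
Proof.
  (* with [t = t1 - t2], the equation says [x_part x t] maps [v] to [- x_free_part x t] *)
  destruct exists_act_opp as [m Hm].
  set (t := tadd t1 (tact m t2)).
  destruct (components_bexpr (x_part x t) (tact m (x_free_part x t)) (incl_refl P))
    as [b [Hb Hbsem]].
  exists b; split; auto; intros e v.
  assert (Ht : eval (upd e x v) t1 = eval (upd e x v) t2 <-> eval (upd e x v) t = zero)
    by (unfold t; simpl; rewrite Hm; symmetry; apply sub_eq0).
  rewrite Hbsem, <- eq_iff_components, Ht, eval_upd_split; cbn [eval_term]; rewrite Hm.
  split; intros H; [rewrite H; apply addNr|apply opp_unique, H].
Qed.

Lemma qf_bexpr x f : quantifier_free f -> exists b, bexpr_ok P b /\
  forall e v, bsem (atom_sem e v) b <-> sat (upd e x v) f.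
Proof.
  induction f as [t1 t2| | |g IH|g IHg h IHh|g IHg h IHh|g IHg h IHh| |]; simpl; intros Hf;
    try contradiction.
  - apply equation_bexpr.
  - exists (BAtom (AFree fTrue)); split; [intros a [<-|[]]; simpl; auto|simpl; tauto].
  - exists (BAtom (AFree fFalse)); split; [intros a [<-|[]]; simpl; auto|simpl; tauto].
  - destruct (IH Hf) as [b [Hb Hbsem]]; exists (BNot b); split; auto.
    intros e v; simpl; rewrite Hbsem; tauto.
  - destruct (IHg (proj1 Hf)) as [b [Hb Hbsem]], (IHh (proj2 Hf)) as [c [Hc Hcsem]].
    exists (BAnd b c); split; [exact (bexpr_ok_app Hb Hc)|].
    intros e v; simpl; rewrite Hbsem, Hcsem; tauto.
  - destruct (IHg (proj1 Hf)) as [b [Hb Hbsem]], (IHh (proj2 Hf)) as [c [Hc Hcsem]].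
    exists (BOr b c); split; [exact (bexpr_ok_app Hb Hc)|].
    intros e v; simpl; rewrite Hbsem, Hcsem; tauto.
  - destruct (IHg (proj1 Hf)) as [b [Hb Hbsem]], (IHh (proj2 Hf)) as [c [Hc Hcsem]].
    exists (BOr (BNot b) c); split; [exact (bexpr_ok_app Hb Hc)|].
    intros e v; simpl; rewrite Hbsem, Hcsem; destruct (classic (sat (upd e x v) g)); tauto.
Qed.

Lemma eliminate_component p R b : In p P -> incl R P -> bexpr_ok (p :: R) b ->
  exists b', bexpr_ok R b' /\
    forall e, (exists v, bsem (atom_sem e v) b) <-> (exists v, bsem (atom_sem e v) b').
Proof.
  intros Hp HR Hb.
  set (Ts := component_terms p b).
  assert (HTs : forall t, In t Ts -> forall e, eval1 p (eval e t) = eval e t)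
    by (intros t Ht; apply in_component_terms, Hb in Ht as [_ Ht]; exact Ht).
  destruct (avoid_values_qf add zero act (fun w => eval1 p w = w) Ts HTs) as [f [Hf Hfsem]].
  set (fixb c := bmap (fix_component p c) b).
  exists (fold_right BOr (BAnd (BAtom (AFree f)) (fixb None)) (map (fun t => fixb (Some t)) Ts)).
  split.
  - intros a Ha; apply batoms_fold_or in Ha as [[<-|Ha]|[c [Hc Ha]]]; [exact Hf|..].
    + apply (bexpr_ok_fix None Hb), Ha.
    + apply in_map_iff in Hc as [t [<- _]]; apply (bexpr_ok_fix (Some t) Hb), Ha.
  - intros e; split.
    + intros [v Hv]; exists v; rewrite bsem_fold_or; simpl.
      destruct (classic (exists t, In t Ts /\ eval1 p v = eval e t)) as [[t [Ht Hpv]]|Hno].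
      * right; exists (fixb (Some t)); split; [apply (in_map (fun t => fixb (Some t))); auto|].
        apply bsem_fix_some; auto.
      * left; split.
        -- apply Hfsem; exists (eval1 p v); split; [apply (proj_idempotent HP); auto|].
           intros t Ht Heq; apply Hno; eauto.
        -- apply bsem_fix_none; auto; intros t Ht Heq; apply Hno; eauto.
    + intros [v Hv]; rewrite bsem_fold_or in Hv; simpl in Hv.
      destruct Hv as [[Hfv Hv]|[c [Hc Hv]]].
      * apply Hfsem in Hfv as [w [Hw Hwt]].
        destruct (exists_component p v Hp Hw) as [v' [Hv'p Hv'o]]; exists v'.
        apply (bsem_fix_none p b e v'); [rewrite Hv'p; exact Hwt|].
        eapply bsem_fix_move; [exact Hb| |exact Hv]; auto.
      * apply in_map_iff in Hc as [t [<- Ht]].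
        destruct (exists_component p v Hp (HTs t Ht e)) as [v' [Hv'p Hv'o]]; exists v'.
        apply (bsem_fix_some p t b e v' Hv'p); eapply bsem_fix_move; [exact Hb| |exact Hv]; auto.
Qed.

Lemma eliminate_components R : forall b, incl R P -> bexpr_ok R b ->
  exists b', bexpr_ok [] b' /\
    forall e, (exists v, bsem (atom_sem e v) b) <-> (exists v, bsem (atom_sem e v) b').
Proof.
  induction R as [|p R IH]; intros b HR Hb; [exists b; split; auto; tauto|].
  assert (HR' : incl R P) by (intros p' Hp'; apply HR; right; auto).
  destruct (eliminate_component (HR p (or_introl eq_refl)) HR' Hb) as [b1 [Hb1 Hbb1]].
  destruct (IH b1 HR' Hb1) as [b2 [Hb2 Hb1b2]].
  exists b2; split; auto; intros e; rewrite Hbb1; auto.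
Qed.

Lemma free_bexpr_qf b : bexpr_ok [] b ->
  exists f, quantifier_free f /\ forall e v, bsem (atom_sem e v) b <-> sat e f.
Proof.
  induction b as [[f|p t]|b IH|b IHb c IHc|b IHb c IHc]; intros Hok.
  - exists f; split; [apply (Hok _ (or_introl eq_refl))|reflexivity].
  - destruct (Hok _ (or_introl eq_refl)) as [[] _].
  - destruct (IH Hok) as [f [Hf Hfsem]]; exists (fNot f); split; auto.
    intros e v; simpl; rewrite Hfsem; reflexivity.
  - destruct IHb as [f [Hf Hfsem]], IHc as [g [Hg Hgsem]];
      try (intros a Ha; apply Hok, in_or_app; auto).
    exists (fAnd f g); split; [split; auto|intros e v; simpl; rewrite Hfsem, Hgsem; reflexivity].
  - destruct IHb as [f [Hf Hfsem]], IHc as [g [Hg Hgsem]];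
      try (intros a Ha; apply Hok, in_or_app; auto).
    exists (fOr f g); split; [split; auto|intros e v; simpl; rewrite Hfsem, Hgsem; reflexivity].
Qed.

Lemma exists_elim_qf x g : quantifier_free g -> exists g', quantifier_free g' /\
  forall e, (exists v, sat (upd e x v) g) <-> sat e g'.
Proof.
  intros Hg; destruct (qf_bexpr x g Hg) as [b [Hb Hbg]].
  destruct (eliminate_components (incl_refl P) Hb) as [b' [Hb' Hbb']].
  destruct (free_bexpr_qf Hb') as [g' [Hg' Hb'g']].
  exists g'; split; auto; intros e.
  setoid_rewrite <- Hbg; rewrite Hbb'; split.
  - intros [v Hv]; apply (Hb'g' e v), Hv.
  - intros H; exists zero; apply Hb'g', H.
Qed.

End Elimination.
End NearVectorSpace.

Theorem mainTheorem16 (V K : Type) (add : V -> V -> V) (zero : V) (opp : V -> V)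
    (act : K -> V -> V)
    (HV : is_near_vector_space add zero opp act)
    (Hcomm : commutative_F act)
    (Hblocks : finitely_many_blocks add zero act) :
  theory_has_QE add zero act.
Proof.
  destruct (projection_system_exists HV Hcomm Hblocks) as [P HP].
  apply theory_has_QE_of_exists_elim; intros x g.
  apply (exists_elim_qf HV Hcomm HP).
Qed.
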